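(* Let $\mathbf{FL}=(FL_0,FL_1,\dots)$ be any sequence of recommendations maximizing long-term engagement, let $(\mathcal U^*,\mathcal C^* )$ be any maximum stable set with recommendation $R^*$, and let $\mathbf{ALG}=(ALG_0,ALG_1,\dots)$ be the sequence with $ALG_t(i)=R^*(i)$ for all $t$ and all $i\in\mathcal U^*$ (and, at $t=0$, $ALG_0(i)$ an arbitrary subset of $\mathcal C^*$ of size $K$ for users $i\in\mathcal U_0\setminus\mathcal U^*$). Then $\mathrm{LTE}(\mathbf{FL})=\mathrm{LTE}(\mathbf{ALG})$.
   Context: An instance consists of a dimension $D$, users $\mathcal U_0=\{1,\dots,U\}$ with types $u_i\in\mathbb R^D_{\ge0}$, creators $\mathcal C_0=\{1,\dots,C\}$ with types $c_j\in\mathbb R^D_{\ge 0}$, all of Euclidean norm $1$, a positive integer $K$, a creator threshold $\bar a\in\mathbb N_0$ and a user threshold $\bar e\in[0,1]$. At time $t=0,1,\dots$ the platform has sets $\mathcal U_t,\mathcal C_t$ and chooses $R_t$ assigning each $i\in\mathcal U_t$ a set $R_t(i)\subseteq\mathcal C_t$ of size $K$ (smaller only if necessary). Engagement $E(\mathcal U,\mathcal C,R)=\sum_{i\in\mathcal U}\sum_{j\in R(i)}u_i^Tc_j$. Then $\mathcal U_{t+1}=\{i\in\mathcal U_t:|R_t(i)|=K,\ u_i^Tc_j\ge\bar e\ \forall j\in R_t(i)\}$, $\mathcal C_{t+1}=\{j\in\mathcal C_t:|\{i\in\mathcal U_t:j\in R_t(i)\}|\ge\bar a\}$. $\mathrm{LTE}(\mathbf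 R)=\lim_{T\to\infty}\frac1T\sum_{t<T}E(\mathcal U_t,\mathcal C_t,R_t)$. $(\mathcal U,\mathcal C)$ with $\mathcal U\subseteq\mathcal U_0$, $\mathcal C\subseteq\mathcal C_0$ is a stable set with recommendation $R$ if $R(i)\subseteq\mathcal C$, $|R(i)|=K$ and $u_i^Tc_j\ge\bar e$ for all $i\in\mathcal U$, $j\in R(i)$, and $|\{i\in\mathcal U:j\in R(i)\}|\ge\bar a$ for all $j\in\mathcal C$; a maximum stable set maximizes $E(\mathcal U,\mathcal C,R)$ among all stable sets with recommendations. *)

From HB Require Import structures.
From mathcomp Require Import all_boot all_order all_algebra.
From mathcomp Require Import all_classical all_reals all_analysis.
Set Implicit Arguments. Unset Strict Implicit. Unset Printing Implicit Defensive.
Import Order.TTheory GRing.Theory Num.Theory numFieldNormedType.Exports.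
Local Open Scope ring_scope.

Section Model.
Variables (R : realType) (D U C : nat).
Variables (u : 'I_U -> 'I_D -> R) (c : 'I_C -> 'I_D -> R).
Variables (K abar : nat) (ebar : R).

Definition dot (x y : 'I_D -> R) : R := \sum_(k < D) x k * y k.

Definition enorm (x : 'I_D -> R) : R := Num.sqrt (\sum_(k < D) x k ^+ 2).

(* A recommendation: assigns each user a set of creators (only values on the
   current user set matter). *)
Definition recommendation := 'I_U -> {set 'I_C}.

Definition engagement (Us : {set 'I_U}) (rec : recommendation) : R :=
  \sum_(i in Us) \sum_(j in rec i) dot (u i) (c j).

Definition step (st : {set 'I_U} * {set 'I_C}) (rec : recommendation)
  : {set 'I_U} * {set 'I_C} :=
  ([set i in st.1 | (#|rec i| == K) && [forall j in rec i, ebar <= dot (u i) (c j)]],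
   [set j in st.2 | abar <= #|[set i in st.1 | j \in rec i]| ]%N).

Fixpoint states (Rs : nat -> recommendation) (t : nat) : {set 'I_U} * {set 'I_C} :=
  match t with
  | 0 => ([set: 'I_U], [set: 'I_C])
  | t'.+1 => step (states Rs t') (Rs t')
  end.

(* Rs is a legal sequence of recommendations: R_t(i) is a subset of C_t of
   size K, smaller only if necessary, i.e. of size min(K, |C_t|). *)
Definition valid_seq (Rs : nat -> recommendation) : Prop :=
  forall t i, i \in (states Rs t).1 ->
    Rs t i \subset (states Rs t).2 /\ #|Rs t i| = minn K #|(states Rs t).2|.

Definition eng_at (Rs : nat -> recommendation) (t : nat) : R :=
  engagement (states Rs t).1 (Rs t).

Definition avg_eng (Rs : nat -> recommendation) (T : nat) : R :=
  (T%:R)^-1 * \sum_(t < T) eng_at Rs t.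

Definition has_LTE (Rs : nat -> recommendation) (l : R) : Prop :=
  (avg_eng Rs @ \oo --> l)%classic.

Definition LTE_maximizer (Rs : nat -> recommendation) : Prop :=
  valid_seq Rs /\
  exists l, has_LTE Rs l /\
    forall Rs' l', valid_seq Rs' -> has_LTE Rs' l' -> l' <= l.

Definition stable (Us : {set 'I_U}) (Cs : {set 'I_C}) (rec : recommendation) : Prop :=
  (forall i, i \in Us ->
     rec i \subset Cs /\ #|rec i| = K /\
     (forall j, j \in rec i -> ebar <= dot (u i) (c j))) /\
  (forall j, j \in Cs -> (abar <= #|[set i in Us | j \in rec i]|)%N).

Definition max_stable (Us : {set 'I_U}) (Cs : {set 'I_C}) (rec : recommendation) : Prop :=
  stable Us Cs rec /\
  forall Us' Cs' rec', stable Us' Cs' rec' -> engagement Us' rec' <= engagement Us rec.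

End Model.

(** A recommendation sequence can only remove users and creators, so its state
    (U_t, C_t) is eventually constant; a fixed point of the dynamics, together
    with the recommendation played there, is a stable set.  Hence every legal
    sequence eventually earns at most the engagement E* of a maximum stable set,
    and its long-term engagement is at most E*.  ALG keeps U* forever and plays
    R* on it, so it earns at least E* at every step, hence exactly E*
    eventually, and LTE(ALG) = E*.  Being a maximizer, FL has LTE(FL) >= E*. *)
From HB Require Import structures.
From mathcomp Require Import all_boot all_order all_algebra.
From mathcomp Require Import all_classical all_reals all_analysis.
Set Implicit Arguments. Unset Strict Implicit. Unset Printing Implicit Defensive.
Import Order.TTheory GRing.Theory Num.Theory numFieldNormedType.Exports.
Local Open Scope classical_set_scope.
Local Open Scope ring_scope.

Lemma nonincreasing_nat_eventually_const (f : nat -> nat) :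
  {homo f : m n / (m <= n)%N >-> (n <= m)%N} ->
  exists T, forall t, (T <= t)%N -> f t = f T.
Proof.
move=> f_noninc.
have f_val : exists m, `[< exists t, f t = m >] by exists (f 0%N); apply/asboolP; exists 0%N.
case: (ex_minnP f_val) => m /asboolP [T fT] m_min.
exists T => t le_Tt; apply/eqP; rewrite eqn_leq f_noninc //= fT.
by apply: m_min; apply/asboolP; exists t.
Qed.

Section RunningMean.
Variable R : realType.

(* [running_mean a n.+1 = arithmetic_mean a n]; the value at [0] is [0]. *)
Definition running_mean (a : R ^nat) : R ^nat :=
  fun n => n%:R^-1 * \sum_(t < n) a t.

Lemma running_mean_cvg (a : R ^nat) (l : R) :
  a @ \oo --> l -> running_mean a @ \oo --> l.
Proof.
move=> /cesaro; rewrite -(cvg_shiftS (running_mean a)).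
apply: cvg_trans; apply: near_eq_cvg; apply: nearW => n.
by rewrite /arithmetic_mean /running_mean /series /= big_mkord.
Qed.

Lemma running_mean_cvg_eventually_cst (a : R ^nat) (E : R) :
  (\forall t \near \oo, a t = E) -> running_mean a @ \oo --> E.
Proof. by move=> aE; apply: running_mean_cvg; apply: cvg_near_cst. Qed.

Lemma running_mean_lim_le (a : R ^nat) (E l : R) :
  (\forall t \near \oo, a t <= E) -> running_mean a @ \oo --> l -> l <= E.
Proof.
move=> aE al.
pose b t := Num.max (a t) E.
have bE : running_mean b @ \oo --> E.
  apply: running_mean_cvg_eventually_cst.
  by apply: filterS aE => t /max_idPr.
apply: (ler_cvg_to al bE); apply: nearW => n.
by rewrite ler_wpM2l ?invr_ge0 // ler_sum // => t _; rewrite le_max lexx.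
Qed.

End RunningMean.

Lemma dot_ge0 (R : realType) (D : nat) (x y : 'I_D -> R) :
  (forall k, 0 <= x k) -> (forall k, 0 <= y k) -> 0 <= dot x y.
Proof. by move=> x_ge0 y_ge0; apply: sumr_ge0 => k _; apply: mulr_ge0. Qed.

Section Dynamics.
Variables (R : realType) (D U C : nat).
Variables (u : 'I_U -> 'I_D -> R) (c : 'I_C -> 'I_D -> R).
Variables (K abar : nat) (ebar : R).

Local Notation step := (step u c K abar ebar).
Local Notation states := (states u c K abar ebar).
Local Notation stable := (stable u c K abar ebar).

Lemma step_subset st rec : (step st rec).1 \subset st.1 /\ (step st rec).2 \subset st.2.
Proof. by split; apply/fintype.subsetP => x; rewrite inE => /andP[]. Qed.

Lemma states_subset Rs m n : (m <= n)%N ->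
  (states Rs n).1 \subset (states Rs m).1 /\ (states Rs n).2 \subset (states Rs m).2.
Proof.
elim: n => [|n IH]; first by rewrite leqn0 => /eqP ->; rewrite !subxx.
rewrite leq_eqVlt => /orP[/eqP -> | /IH [sub1 sub2]]; first by rewrite !subxx.
have [step1 step2] := step_subset (states Rs n) (Rs n).
by split; apply: fintype.subset_trans; eassumption.
Qed.

Lemma states_eventually_const Rs :
  exists T, forall t, (T <= t)%N -> states Rs t = states Rs T.
Proof.
pose f t := (#|(states Rs t).1| + #|(states Rs t).2|)%N.
have [|T fT] := @nonincreasing_nat_eventually_const f.
  by move=> m n /(states_subset Rs) [sub1 sub2]; rewrite leq_add ?subset_leq_card.
exists T => t /[dup] le_Tt /(states_subset Rs) [sub1 sub2].
have /andP[sup1 sup2] : ((states Rs T).1 \subset (states Rs t).1) &&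
                        ((states Rs T).2 \subset (states Rs t).2).
  rewrite -(leqif_add (subset_leqif_card sub1) (subset_leqif_card sub2)).
  by rewrite -/(f t) -/(f T) fT.
by apply: injective_projections; apply/eqP; rewrite finset.eqEsubset ?sub1 ?sup1 ?sub2 ?sup2.
Qed.

Lemma stable_step_fixpoint (st : {set 'I_U} * {set 'I_C}) (rec : recommendation U C) :
  (forall i, i \in st.1 -> rec i \subset st.2) -> step st rec = st ->
  stable st.1 st.2 rec.
Proof.
case: st => Us Cs /= rec_sub [U_fixed C_fixed]; split=> [i i_in | j j_in].
  have := i_in; rewrite -{1}U_fixed inE => /and3P[_ /eqP card_rec /forall_inP dot_ge].
  by split; [exact: rec_sub | split].
by have := j_in; rewrite -{1}C_fixed inE => /andP[].
Qed.

Lemma eng_at_eventually_le_max_stable Rs Us Cs rec :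
  valid_seq u c K abar ebar Rs -> max_stable u c K abar ebar Us Cs rec ->
  \forall t \near \oo, eng_at u c K abar ebar Rs t <= engagement u c Us rec.
Proof.
move=> Rs_valid [_ rec_max]; have [T stT] := states_eventually_const Rs.
exists T => // t /= le_Tt; apply: (rec_max _ (states Rs t).2).
apply: stable_step_fixpoint => [i /(Rs_valid t i) []//|].
by rewrite [LHS](stT t.+1) ?stT // leqW.
Qed.

Lemma stable_states_superset Rs Us Cs rec :
  stable Us Cs rec -> (forall t i, i \in Us -> Rs t i = rec i) ->
  forall t, Us \subset (states Rs t).1.
Proof.
move=> [rec_ok _] Rs_rec; elim=> [|t IH]; first exact: finset.subsetT.
apply/fintype.subsetP => i i_in; have [_ [card_rec dot_ge]] := rec_ok i i_in.
rewrite inE (fintype.subsetP IH) //= Rs_rec // card_rec eqxx.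
by apply/forall_inP.
Qed.

Lemma engagement_le_superset (Us Us' : {set 'I_U}) (rec rec' : recommendation U C) :
  (forall i j, 0 <= dot (u i) (c j)) ->
  Us \subset Us' -> {in Us, rec' =1 rec} ->
  engagement u c Us rec <= engagement u c Us' rec'.
Proof.
move=> dot_nonneg sub rec_eq.
rewrite /engagement [leRHS](big_setID Us) /= (finset.setIidPr sub) -[leLHS]addr0.
rewrite lerD //; last by apply: sumr_ge0 => i _; apply: sumr_ge0.
by apply: ler_sum => i i_in; rewrite rec_eq.
Qed.

End Dynamics.

Theorem proposition1 (R : realType) (D U C : nat)
  (u : 'I_U -> 'I_D -> R) (c : 'I_C -> 'I_D -> R)
  (K abar : nat) (ebar : R)
  (hu_nonneg : forall i k, 0 <= u i k) (hc_nonneg : forall j k, 0 <= c j k)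
  (hu_norm : forall i, enorm (u i) = 1) (hc_norm : forall j, enorm (c j) = 1)
  (hK : (0 < K)%N) (he0 : 0 <= ebar) (he1 : ebar <= 1)
  (FL : nat -> recommendation U C)
  (hFL : LTE_maximizer u c K abar ebar FL)
  (Ustar : {set 'I_U}) (Cstar : {set 'I_C}) (Rstar : recommendation U C)
  (hstar : max_stable u c K abar ebar Ustar Cstar Rstar)
  (ALG : nat -> recommendation U C)
  (hALG_valid : valid_seq u c K abar ebar ALG)
  (hALG_star : forall t i, i \in Ustar -> ALG t i = Rstar i)
  (hALG_0 : forall i, i \notin Ustar -> ALG 0%N i \subset Cstar /\ #|ALG 0%N i| = K) :
  forall l, has_LTE u c K abar ebar FL l -> has_LTE u c K abar ebar ALG l.
Proof.
move=> l FL_l; have [FL_valid [l0 [FL_l0 l0_max]]] := hFL.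
have <- : l0 = l by exact: (cvg_unique _ FL_l0 FL_l).
set E := engagement u c Ustar Rstar.
have ALG_ge t : E <= eng_at u c K abar ebar ALG t.
  apply: engagement_le_superset => [i j||i /hALG_star //].
    exact: dot_ge0.
  exact: stable_states_superset hstar.1 hALG_star t.
have ALG_E : has_LTE u c K abar ebar ALG E.
  apply: running_mean_cvg_eventually_cst.
  apply: filterS (eng_at_eventually_le_max_stable hALG_valid hstar) => t le_E.
  by apply/eqP; rewrite eq_le le_E ALG_ge.
have l0_le : l0 <= E.
  exact: running_mean_lim_le (eng_at_eventually_le_max_stable FL_valid hstar) FL_l0.
suff -> : l0 = E by [].
by apply/eqP; rewrite eq_le l0_le (l0_max _ _ hALG_valid ALG_E).
Qed.
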